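(* Let $n$ be even and $F\colon\mathbb F_2^n\to\mathbb F_2^n$ a quadratic APN function with amplitude distribution $[0^{k_0},2^{k_2},\dots,n^{k_n}]$. Then (i) $\sum_{i=1}^{n/2}k_{2i}(2^{2i}-1)=2^n-1$; (ii) if $i>n/2$ then $k_i\le1$; (iii) if $i\neq j$ and $k_i,k_j\ge1$, then $i+j\le n$.
   Context: $\langle\cdot,\cdot\rangle$ is the standard dot product. $F$ is APN if for every $a\ne0$ and $c$, $F(x)+F(x+a)=c$ has at most 2 solutions; quadratic if each component $F_b(x)=\langle b,F(x)\rangle$ is a quadratic form plus an affine function. For quadratic $F$ and fixed $b$ there is $k$ with $|W_F(b,a)|\in\{0,2^{(n+k)/2}\}$ for all $a$, where $W_F(b,a)=\sum_x(-1)^{F_b(x)+\langle x,a\rangle}$; $2^{(n+k)/2}$ is the amplitude of $F_b$. The amplitude distribution $[0^{k_0},1^{k_1},\dots,n^{k_n}]$ means exactly $k_i$ nonzero $b$ give amplitude $2^{(n+i)/2}$ (here only even $i$ occur). *)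

From mathcomp Require Import all_boot all_order all_algebra.
Set Implicit Arguments. Unset Strict Implicit. Unset Printing Implicit Defensive.
Import Order.TTheory GRing.Theory Num.Theory.
Local Open Scope ring_scope.

Notation vec n := 'rV['F_2]_n.

Definition dot (n : nat) (u v : vec n) : 'F_2 := \sum_(i < n) u 0 i * v 0 i.

Definition comp (n : nat) (F : vec n -> vec n) (b : vec n) (x : vec n) : 'F_2 :=
  dot b (F x).

Definition APN (n : nat) (F : vec n -> vec n) : Prop :=
  forall a c : vec n, a != 0 ->
    (#|[set x : vec n | (F x + F (x + a) == c)%R]| <= 2)%N.

Definition quad_plus_affine (n : nat) (f : vec n -> 'F_2) : Prop :=
  exists (Q : 'I_n -> 'I_n -> 'F_2) (l : 'I_n -> 'F_2) (e : 'F_2),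
    forall x : vec n,
      f x = \sum_(i < n) \sum_(j < n) Q i j * x 0 i * x 0 j
            + \sum_(i < n) l i * x 0 i + e.

Definition quadratic (n : nat) (F : vec n -> vec n) : Prop :=
  forall b : vec n, quad_plus_affine (comp F b).

Definition sgn (v : 'F_2) : int := if v == 0 then 1 else -1.

Definition walsh (n : nat) (F : vec n -> vec n) (b a : vec n) : int :=
  \sum_(x : vec n) sgn (comp F b x + dot x a).

(* F_b has amplitude 2^((n+k)/2): |W_F(b,a)| in {0, 2^((n+k)/2)} for all a,
   with the value 2^((n+k)/2) attained (expressed with squares to stay in int) *)
Definition has_amplitude (n : nat) (F : vec n -> vec n) (b : vec n) (k : nat) : bool :=
  [forall a : vec n, (walsh F b a ^+ 2 == 0) || (walsh F b a ^+ 2 == (2 ^ (n + k))%:Z)]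
  && [exists a : vec n, walsh F b a ^+ 2 == (2 ^ (n + k))%:Z].

Definition ampl_count (n : nat) (F : vec n -> vec n) (i : nat) : nat :=
  #|[set b : vec n | (b != 0) && has_amplitude F b i]|.

(* For a component f = F_b of a quadratic F, the polar form
   f (x + u) - f x - f u + f 0 is bilinear.  Squaring the Walsh sum and substituting
   y = x + u then gives W_f(a)^2 = 2^n |V| or 0, where V is the radical of the polar form,
   so F_b has amplitude 2^((n+k)/2) exactly when |V| = 2^k.  By duality, u lies in the
   radical of F_b for as many b as x |-> F (x + u) - F x - F u + F 0 has zeros, and for
   u <> 0 APN-ness leaves only x = 0 and x = u.  Hence the radicals of two distinct nonzero
   components meet only in 0, so 2^(k_b + k_b') <= 2^n, which gives (ii) and (iii); and
   counting the pairs (b, u) with u in the radical of F_b gives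
   sum_(b <> 0) 2^(k_b) = 2 (2^n - 1), which is (i) as only even k occur for even n. *)

From mathcomp Require Import all_boot all_order all_algebra.
From mathcomp Require Import ring zify.
(* Imported last, so that [comp] is the component function of Defs, not ssrfun's composition. *)
From Pilot Require Import Defs.
Set Implicit Arguments. Unset Strict Implicit. Unset Printing Implicit Defensive.
Import GRing.Theory Num.Theory.
Local Open Scope ring_scope.

Lemma F2_pchar : 2%N \in [pchar 'F_2]. Proof. exact: pchar_Fp. Qed.

Lemma sgnD (p q : 'F_2) : sgn (p + q) = sgn p * sgn q.
Proof. by case: p q => [[|[|//]] ?] [[|[|//]] ?]. Qed.

Lemma sgnB (p q : 'F_2) : sgn (p - q) = sgn p * sgn q.
Proof. by rewrite oppr_pchar2 ?F2_pchar ?sgnD. Qed.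

Lemma sgnN0 (p : 'F_2) : p != 0 -> sgn p = -1.
Proof. by rewrite /sgn => /negbTE ->. Qed.

Section VectorsOverF2.

Variable n : nat.
Implicit Types u v w : vec n.

Lemma vec_addrr v : v + v = 0.
Proof. by apply/rowP => i; rewrite !mxE addrr_pchar2 ?F2_pchar. Qed.

Lemma vec_oppr v : - v = v.
Proof. by apply/esym/eqP; rewrite -addr_eq0 vec_addrr. Qed.

Lemma vec_addr_eq0 v w : (v + w == 0) = (v == w).
Proof. by rewrite addr_eq0 vec_oppr. Qed.

Lemma card_vec : #|{: vec n}| = (2 ^ n)%N.
Proof. by rewrite card_mx card_Fp // mul1n. Qed.

Lemma dotC u v : dot u v = dot v u.
Proof. by apply: eq_bigr => i _; rewrite mulrC. Qed.

Lemma dotDr u v w : dot u (v + w) = dot u v + dot u w.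
Proof. by rewrite /dot -big_split; apply: eq_bigr => i _; rewrite mxE mulrDr. Qed.

Lemma dotDl u v w : dot (u + v) w = dot u w + dot v w.
Proof. by rewrite dotC dotDr !(dotC w). Qed.

Lemma dotNr u v : dot u (- v) = - dot u v.
Proof. by rewrite /dot -sumrN; apply: eq_bigr => i _; rewrite mxE mulrN. Qed.

Lemma dot0l v : dot 0 v = 0.
Proof. by rewrite /dot big1 // => i _; rewrite mxE mul0r. Qed.

Lemma dot_delta (i : 'I_n) v : dot (delta_mx 0 i) v = v 0 i.
Proof.
rewrite /dot (bigD1 i) //= big1 => [|j /negbTE ji]; rewrite mxE ?eqxx ?ji ?mul0r //.
by rewrite mul1r addr0.
Qed.

Lemma dot_eq0_forall u : [forall v, dot u v == 0] = (u == 0).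
Proof.
apply/forallP/eqP => [u_orth|-> v]; last by rewrite dot0l.
by apply/rowP => i; have /eqP := u_orth (delta_mx 0 i); rewrite dotC dot_delta mxE.
Qed.

(* If chi u0 = 1, the translation u |-> u + u0 of V turns the sum into its opposite. *)
Lemma sum_sgn_additive (V : {set vec n}) (chi : vec n -> 'F_2) :
  {in V &, forall u v, u + v \in V} -> {in V &, {morph chi : u v / u + v}} ->
  \sum_(u in V) sgn (chi u) = if [forall u in V, chi u == 0] then #|V|%:Z else 0.
Proof.
move=> addV chiD; case: ifP => [/forall_inP chi0|].
  by rewrite (eq_bigr (fun _ => 1)) => [|u /chi0 /eqP ->//]; rewrite sumr_const natz.
move/negbT/forall_inPn => [u0 u0V chiu0].
set S := \sum_(u in V) _.
have S_opp : S = - S.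
  rewrite {1}/S (reindex_inj (addIr u0)) /= (eq_bigl (fun u => u \in V)) => [|u].
    rewrite -sumrN; apply: eq_bigr => u uV.
    by rewrite chiD // sgnD (sgnN0 chiu0) mulrN1.
  apply/idP/idP => [uu0V|/addV]; last exact.
  by rewrite -[u]addr0 -(vec_addrr u0) addrA addV.
have /eqP : S *+ 2 = 0 by rewrite mulr2n {2}S_opp subrr.
by rewrite mulrn_eq0 => /eqP.
Qed.

Lemma sum_sgn_linear (h : vec n -> 'F_2) : {morph h : u v / u + v} ->
  \sum_v sgn (h v) = if [forall v, h v == 0] then (2 ^ n)%:Z else 0.
Proof.
move=> hD; have := @sum_sgn_additive setT h (fun u v _ _ => in_setT _) (fun u v _ _ => hD u v).
rewrite cardsT card_vec (eq_bigl xpredT) => [->|v]; last by rewrite in_setT.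
by congr (if _ then _ else _); apply: eq_forallb => v; rewrite in_setT.
Qed.

Lemma sum_sgn_dot u : \sum_v sgn (dot u v) = if u == 0 then (2 ^ n)%:Z else 0.
Proof. by rewrite sum_sgn_linear ?dot_eq0_forall // => v w; rewrite dotDr. Qed.

Lemma card_mul_trivI (V W : {set vec n}) :
  {in V &, forall u v, u + v \in V} -> {in W &, forall u v, u + v \in W} ->
  (forall w, w \in V -> w \in W -> w = 0) -> (#|V| * #|W| <= 2 ^ n)%N.
Proof.
move=> addV addW VW0; rewrite -cardsX -(@card_in_imset _ _ (fun p => p.1 + p.2)).
  by rewrite -card_vec max_card.
move=> [v w] [v' w'] /setXP[vV wW] /setXP[v'V w'W] /= E.
have vv'_ww' : v + v' = w + w'.
  by rewrite -[v + v']addr0 -(vec_addrr w) addrACA E addrACA vec_addrr add0r addrC.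
have /eqP : v + v' = 0 by apply: VW0; rewrite ?addV // vv'_ww' addW.
by rewrite vec_addr_eq0 => /eqP eq_v; rewrite -eq_v in E *; rewrite (addrI _ E).
Qed.

End VectorsOverF2.

(* Subtractions (equal to additions over F_2) make identities about [polar] ring identities. *)
Definition polar n (f : vec n -> 'F_2) (x u : vec n) : 'F_2 := f (x + u) - f x - f u + f 0.

Definition radical n (f : vec n -> 'F_2) : {set vec n} :=
  [set u | [forall x, polar f x u == 0]].

Section QuadraticForm.

Variables (n : nat) (f : vec n -> 'F_2).
Hypothesis f_quad : quad_plus_affine f.

Lemma polarC x u : polar f x u = polar f u x.
Proof. by rewrite /polar (addrC u x) [_ - f u]addrAC. Qed.

Lemma polarDl x y u : polar f (x + y) u = polar f x u + polar f y u.
Proof.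
have [Q [l [e fE]]] := f_quad.
pose q (z : vec n) := \sum_i \sum_j Q i j * z 0 i * z 0 j.
pose L (z : vec n) := \sum_i l i * z 0 i.
pose bil (z w : vec n) := \sum_i \sum_j Q i j * (z 0 i * w 0 j + w 0 i * z 0 j).
have qD z w : q (z + w) = q z + q w + bil z w.
  rewrite /q /bil -!big_split; apply: eq_bigr => i _ /=.
  by rewrite -!big_split; apply: eq_bigr => j _ /=; rewrite !mxE; ring.
have LD z w : L (z + w) = L z + L w.
  by rewrite /L -big_split; apply: eq_bigr => i _ /=; rewrite mxE mulrDr.
have q0 : q 0 = 0 by rewrite /q big1 // => i _; rewrite big1 // => j _; rewrite !mxE !mulr0.
have L0 : L 0 = 0 by rewrite /L big1 // => i _; rewrite mxE mulr0.
have polarE z : polar f z u = bil z u.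
  have fqL w : f w = q w + L w + e := fE w.
  by rewrite /polar !fqL qD LD q0 L0; ring.
rewrite !polarE /bil -big_split; apply: eq_bigr => i _ /=.
by rewrite -big_split; apply: eq_bigr => j _ /=; rewrite !mxE; ring.
Qed.

Lemma radical0 : 0 \in radical f.
Proof. by rewrite inE; apply/forallP => x; rewrite /polar addr0 subrr subrK. Qed.

Lemma radicalD : {in radical f &, forall u v, u + v \in radical f}.
Proof.
move=> u v; rewrite !inE => /forallP u_rad /forallP v_rad; apply/forallP => x.
by rewrite polarC polarDl !(polarC _ x) (eqP (u_rad x)) (eqP (v_rad x)) addr0.
Qed.

Lemma sum_sgn_polar u :
  \sum_x sgn (polar f x u) = if u \in radical f then (2 ^ n)%:Z else 0.
Proof. by rewrite sum_sgn_linear ?inE // => x y; rewrite polarDl. Qed.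

(* [rad_trivial a]: x |-> f x + <x, a> is constant on the radical, i.e. W_f(a) <> 0. *)
Definition rad_char (a u : vec n) : 'F_2 := f u - f 0 + dot u a.

Definition rad_trivial (a : vec n) : bool := [forall u in radical f, rad_char a u == 0].

Lemma rad_charD a : {in radical f &, {morph rad_char a : u v / u + v}}.
Proof.
move=> u v _; rewrite inE => /forallP/(_ u)/eqP polar_uv.
have fuv : f (u + v) = polar f u v + f u + f v - f 0 by rewrite /polar; ring.
by rewrite /rad_char fuv polar_uv dotDl; ring.
Qed.

Lemma sum_sgn_rad_char a :
  \sum_(u in radical f) sgn (rad_char a u) = if rad_trivial a then #|radical f|%:Z else 0.
Proof. exact: sum_sgn_additive radicalD (rad_charD a). Qed.

(* Substituting y = x + u separates the variables: x only enters through [polar f x u]. *)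
Lemma sum_sgn_sqr a : (\sum_x sgn (f x + dot x a)) ^+ 2
  = (2 ^ n)%:Z * (if rad_trivial a then #|radical f|%:Z else 0).
Proof.
have -> : (\sum_x sgn (f x + dot x a)) ^+ 2
          = \sum_u (\sum_x sgn (polar f x u)) * sgn (rad_char a u).
  rewrite expr2 mulr_suml; under eq_bigr => x _ do rewrite mulr_sumr (reindex_inj (addrI x)).
  rewrite exchange_big /=; apply: eq_bigr => u _; rewrite mulr_suml.
  apply: eq_bigr => x _; rewrite [in LHS]mulrC -[in LHS]sgnB -sgnD.
  by rewrite /polar /rad_char dotDl; congr sgn; ring.
under eq_bigr => u _ do rewrite sum_sgn_polar.
rewrite -sum_sgn_rad_char mulr_sumr [RHS]big_mkcond; apply: eq_bigr => u _.
by case: ifP; rewrite ?mul0r ?mulr0.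
Qed.

Lemma card_rad_trivial : (#|[set a | rad_trivial a]| * #|radical f| = 2 ^ n)%N.
Proof.
apply/eqP; rewrite -eqz_nat PoszM; apply/eqP.
transitivity (\sum_a \sum_(u in radical f) sgn (rad_char a u)).
  rewrite (eq_bigr _ (fun a _ => sum_sgn_rad_char a)) -big_mkcond sumr_const.
  by rewrite -mulr_natr natz mulrC; congr (Posz _ * _); rewrite cardsE.
have sum_a u :
    \sum_a sgn (rad_char a u) = sgn (f u - f 0) * (if u == 0 then (2 ^ n)%:Z else 0).
  by rewrite -sum_sgn_dot mulr_sumr; apply: eq_bigr => a _; rewrite /rad_char sgnD.
rewrite exchange_big /= (eq_bigr _ (fun u _ => sum_a u)) (bigD1 0) ?radical0 //= big1.
  by rewrite eqxx subrr mul1r addr0.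
by move=> u /andP[_ /negbTE ->]; rewrite mulr0.
Qed.

Lemma card_radical_pow2 : exists2 k, (k <= n)%N & #|radical f| = (2 ^ k)%N.
Proof. by apply/dvdn_pfactor => //; rewrite -card_rad_trivial dvdn_mull. Qed.

End QuadraticForm.

Lemma sqr_eq_pow2_even (z : int) m : z ^+ 2 = (2 ^ m)%:Z -> ~~ odd m.
Proof.
move=> /(congr1 absz); rewrite abszX absz_nat => /(congr1 (logn 2)).
by rewrite lognX pfactorK // => <-; rewrite oddM.
Qed.

Section Amplitude.

Variables (n : nat) (F : vec n -> vec n).

Lemma has_amplitude_even b k : has_amplitude F b k -> ~~ odd (n + k).
Proof. by case/andP=> _ /existsP[a /eqP]; apply: sqr_eq_pow2_even. Qed.

Lemma has_amplitude_inj b i j : has_amplitude F b i -> has_amplitude F b j -> i = j.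
Proof.
case/andP=> _ /existsP[a /eqP Wa] /andP[/forallP/(_ a) + _].
by rewrite Wa eqz_nat expn_eq0 /= eqz_nat eqn_exp2l // eqn_add2l => /eqP.
Qed.

Lemma ampl_countE i : ampl_count F i = (\sum_(b | b != 0%R) has_amplitude F b i)%N.
Proof.
rewrite /ampl_count -sum1_card big_mkcond [RHS]big_mkcond /=; apply: eq_bigr => b _.
by rewrite inE; case: (b != 0); case: (has_amplitude F b i).
Qed.

Lemma ampl_count_odd i : ~~ odd n -> odd i -> ampl_count F i = 0%N.
Proof.
move=> n_even i_odd; apply/eqP; rewrite cards_eq0; apply/eqP/setP => b; rewrite !inE.
apply/negbTE/nandP; right; apply: contraL i_odd => /has_amplitude_even.
by rewrite oddD (negbTE n_even).
Qed.

Hypothesis F_quad : quadratic F.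

Lemma has_amplitudeE b k :
  has_amplitude F b k = (#|radical (comp F b)| == 2 ^ k)%N.
Proof.
have walsh_sqr a := sum_sgn_sqr (F_quad b) a.
rewrite /has_amplitude /walsh; apply/idP/eqP => [/andP[_ /existsP[a]] | rad_card].
  rewrite walsh_sqr; case: ifP => _; last by rewrite mulr0 eq_sym eqz_nat expn_eq0.
  by rewrite -PoszM eqz_nat expnD eqn_mul2l expn_eq0 => /eqP.
have : (0 < #|[set a | rad_trivial (comp F b) a]| * #|radical (comp F b)|)%N.
  by rewrite card_rad_trivial ?expn_gt0.
rewrite muln_gt0 => /andP[/card_gt0P[a]]; rewrite inE => a_triv _.
apply/andP; split.
  apply/forallP => a'; rewrite walsh_sqr; case: ifP => _; last by rewrite mulr0 eqxx.
  by rewrite rad_card -PoszM -expnD eqxx orbT.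
by apply/existsP; exists a; rewrite walsh_sqr a_triv rad_card -PoszM -expnD.
Qed.

End Amplitude.

Lemma sum_card_transpose (T U : finType) (A : T -> {set U}) :
  (\sum_x #|A x| = \sum_y #|[set x | y \in A x]|)%N.
Proof.
have cardE (V : finType) (B : {set V}) : #|B| = (\sum_v (v \in B))%N.
  by rewrite -sum1_card big_mkcond /=; apply: eq_bigr => v _; case: (v \in B).
under eq_bigr => x _ do rewrite cardE.
by rewrite exchange_big; apply: eq_bigr => y _; rewrite cardE; apply: eq_bigr => x _; rewrite inE.
Qed.

Lemma sum_even_indices (g : nat -> nat) n : ~~ odd n -> (forall i, odd i -> g i = 0%N) ->
  (\sum_(i < n.+1) g i = g 0%N + \sum_(1 <= i < (n %/ 2).+1) g (2 * i)%N)%N.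
Proof.
move=> n_even g_odd; have [m ->] : exists m, n = (2 * m)%N.
  by exists (n %/ 2)%N; rewrite {1}(divn_eq n 2) modn2 (negbTE n_even) addn0 mulnC.
rewrite mulKn // -(big_mkord xpredT).
elim: m => [|m IH]; first by rewrite big_nat1 big_geq ?addn0.
rewrite mulnS add2n big_nat_recr //= [X in (X + _)%N]big_nat_recr //= IH.
rewrite [X in _ = (_ + X)%N]big_nat_recr //= (g_odd (2 * m).+1) /= ?oddM // addn0.
by rewrite mulnS add2n addnA.
Qed.

Definition polar_vec n (F : vec n -> vec n) (x u : vec n) : vec n := F (x + u) - F x - F u + F 0.

Section QuadraticAPN.

Variables (n : nat) (F : vec n -> vec n).

Lemma polar_comp b x u : polar (comp F b) x u = dot b (polar_vec F x u).
Proof. by rewrite /polar /comp /polar_vec !dotDr !dotNr. Qed.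

Lemma polar_vec_eq0 x u : (polar_vec F x u == 0) = (F x + F (x + u) == F u + F 0).
Proof. by rewrite /polar_vec !vec_oppr -addrA vec_addr_eq0 [F (x + u) + _]addrC. Qed.

Lemma radical_comp0 : radical (comp F 0) = [set: vec n].
Proof. by apply/setP => u; rewrite !inE; apply/forallP => x; rewrite polar_comp dot0l. Qed.

Hypothesis F_quad : quadratic F.

Lemma card_radical_dual u :
  #|[set b | u \in radical (comp F b)]| = #|[set x | polar_vec F x u == 0]|.
Proof.
set A := [set b | _]; set Z := [set x | _].
have sum_x b : \sum_x sgn (dot b (polar_vec F x u)) = if b \in A then (2 ^ n)%:Z else 0.
  by rewrite inE -sum_sgn_polar ?F_quad //; apply: eq_bigr => x _; rewrite polar_comp.
have sum_b x : \sum_b sgn (dot b (polar_vec F x u)) = if x \in Z then (2 ^ n)%:Z else 0.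
  by rewrite inE -sum_sgn_dot; apply: eq_bigr => b _; rewrite dotC.
have : \sum_b \sum_x sgn (dot b (polar_vec F x u))
       = \sum_x \sum_b sgn (dot b (polar_vec F x u)) by rewrite exchange_big.
rewrite (eq_bigr _ (fun b _ => sum_x b)) (eq_bigr _ (fun x _ => sum_b x)) -!big_mkcond /=.
have pow_neq0 : (2 ^ n)%:Z != 0 by rewrite eqz_nat expn_eq0.
by rewrite !sumr_const => /(mulrIn pow_neq0).
Qed.

Lemma card_radical_amplitude b :
  (#|radical (comp F b)| = 1 + \sum_(i < n.+1) has_amplitude F b i * (2 ^ i - 1))%N.
Proof.
have [k k_le rad_card] := card_radical_pow2 (F_quad b).
rewrite (bigD1 (Ordinal (k_le : (k < n.+1)%N))) //= big1 => [|i i_neq_k].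
  by rewrite has_amplitudeE // rad_card eqxx mul1n addn0 subnKC // expn_gt0.
rewrite has_amplitudeE // rad_card eqn_exp2l // eq_sym.
by move: i_neq_k; rewrite -val_eqE /= => /negbTE ->.
Qed.

Hypothesis F_APN : APN F.

Lemma card_polar_vec_kernel u : u != 0 -> #|[set x | polar_vec F x u == 0]| = 2%N.
Proof.
move=> u_neq0; apply/eqP; rewrite eqn_leq; apply/andP; split.
  apply: leq_trans (F_APN (F u + F 0) u_neq0); apply/subset_leq_card/subsetP => x.
  by rewrite !inE polar_vec_eq0.
apply: (@leq_trans #|[set 0; u]|); first by rewrite cards2 eq_sym u_neq0.
apply/subset_leq_card/subsetP => x; rewrite !inE polar_vec_eq0 => /orP[]/eqP->.
  by rewrite add0r addrC.
by rewrite vec_addrr.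
Qed.

(* A nonzero [u] lies in the radical of [comp F b] for exactly two [b], one of them [0]. *)
Lemma radical_comp_trivI b b' u : b != 0 -> b' != 0 -> b != b' ->
  u \in radical (comp F b) -> u \in radical (comp F b') -> u = 0.
Proof.
move=> b_neq0 b'_neq0 b_neq_b' u_b u_b'; apply/eqP/negPn/negP => u_neq0.
have : (#|0%R |: [set b; b']| <= #|[set c | u \in radical (comp F c)]|)%N.
  apply/subset_leq_card/subsetP => c /setU1P[-> | /set2P[] ->]; rewrite inE //.
  by rewrite radical_comp0 inE.
rewrite card_radical_dual card_polar_vec_kernel // cardsU1 cards2 !inE.
by rewrite b_neq_b' negb_or !(eq_sym 0) b_neq0 b'_neq0.
Qed.

Lemma sum_card_radical :
  (\sum_b #|radical (comp F b)| = 2 ^ n + (2 ^ n - 1) * 2)%N.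
Proof.
rewrite (sum_card_transpose (fun b => radical (comp F b))) (bigD1 0) //=.
rewrite (eq_bigr (fun _ => 2%N)) => [|u u_neq0]; last first.
  by rewrite card_radical_dual card_polar_vec_kernel.
rewrite sum_nat_const cardC1 card_vec subn1; congr (_ + _)%N.
by rewrite -card_vec -cardsT; apply: eq_card => b; rewrite in_set radical0 in_setT.
Qed.

Lemma sum_ampl_count :
  (\sum_(i < n.+1) ampl_count F i * (2 ^ i - 1) = 2 ^ n - 1)%N.
Proof.
have := sum_card_radical; rewrite (bigD1 0) //= radical_comp0 cardsT card_vec.
rewrite (eq_bigr _ (fun b _ => card_radical_amplitude b)) big_split /= sum_nat_const.
rewrite cardC1 card_vec muln1 exchange_big /=.
rewrite (eq_bigr (fun i : 'I_n.+1 => ampl_count F i * (2 ^ i - 1))%N) => [|i _].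
  by rewrite -subn1; lia.
by rewrite ampl_countE big_distrl.
Qed.

Lemma amplitude_add_le b b' i j : b != 0 -> b' != 0 -> b != b' ->
  has_amplitude F b i -> has_amplitude F b' j -> (i + j <= n)%N.
Proof.
move=> b_neq0 b'_neq0 b_neq_b'; rewrite !has_amplitudeE // => /eqP rad_i /eqP rad_j.
rewrite -(@leq_exp2l 2) // expnD -rad_i -rad_j.
by apply: card_mul_trivI => [||u]; [exact: radicalD | exact: radicalD | exact: radical_comp_trivI].
Qed.

End QuadraticAPN.

Theorem mainTheorem5 (n : nat) (F : vec n -> vec n) :
  ~~ odd n -> quadratic F -> APN F ->
  [/\ (\sum_(1 <= i < (n %/ 2).+1) ampl_count F (2 * i) * (2 ^ (2 * i) - 1) = 2 ^ n - 1)%N,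
      (forall i : nat, (n %/ 2 < i)%N -> (ampl_count F i <= 1)%N)
    & (forall i j : nat, i <> j -> (1 <= ampl_count F i)%N -> (1 <= ampl_count F j)%N ->
         (i + j <= n)%N)].
Proof.
move=> n_even F_quad F_APN; split.
- pose g i := (ampl_count F i * (2 ^ i - 1))%N.
  rewrite -(sum_ampl_count F_quad F_APN) (@sum_even_indices g n n_even) => [|i i_odd].
    by rewrite /g expn0 subnn muln0.
  by rewrite /g ampl_count_odd.
- move=> i i_gt; rewrite leqNgt; apply/card_gt1P => -[b [b' []]].
  rewrite !inE => /andP[b_neq0 amp_b] /andP[b'_neq0 amp_b'] b_neq_b'.
  by have := amplitude_add_le F_quad F_APN b_neq0 b'_neq0 b_neq_b' amp_b amp_b'; lia.
- move=> i j i_neq_j /card_gt0P[b] /[!inE] /andP[b_neq0 amp_i].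
  move=> /card_gt0P[b'] /[!inE] /andP[b'_neq0 amp_j].
  have b_neq_b' : b != b'.
    apply/eqP => eq_bb'; rewrite eq_bb' in amp_i.
    exact: i_neq_j (has_amplitude_inj amp_i amp_j).
  exact: (amplitude_add_le F_quad F_APN b_neq0 b'_neq0 b_neq_b' amp_i amp_j).
Qed.
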